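(* Let $\lambda \geq 0$, $0 \leq \gamma \leq 1$, $0\leq\beta<1$ and $\tau \in \mathbb{C}\setminus\{0\}$. Let $f(z)=z+\sum_{k=2}^{\infty}a_kz^k$ belong to $\Theta_{\Sigma}(\tau,\lambda,\gamma,0;\beta)$ (the case $\delta=0$). Then $$|a_2| \leq \min\left\{\frac{2|\tau|(1-\beta)}{1+\lambda+\gamma+5\lambda\gamma},\ \sqrt{\frac{2|\tau|(1-\beta)}{1+2(\lambda+\gamma+5\lambda\gamma)}}\right\}\quad\text{and}\quad |a_3| \leq \frac{2|\tau|(1-\beta)}{1+2(\lambda+\gamma+5\lambda\gamma)}.$$
   Context: Let $\mathbb{U}=\{z\in\mathbb{C}:|z|<1\}$. $\Sigma$ denotes the class of bi-univalent functions: functions $f(z)=z+\sum_{k=2}^\infty a_kz^k$ analytic and univalent in $\mathbb{U}$ whose inverse $f^{-1}$ extends to a univalent function $g$ on $\mathbb{U}$; this $g$ has the expansion $g(w)=w-a_2w^2+(2a_2^2-a_3)w^3-\cdots$. For $\delta\in\mathbb{N}_0$ and $h(z)=z+\sum_{k\ge2}c_kz^k$ analytic in $\mathbb{U}$, the Ruscheweyh derivative is $\mathcal{R}^\delta h(z)=z+\sum_{k=2}^{\infty}\frac{\Gamma(\delta+k)}{\Gamma(k)\Gamma(\delta+1)}c_kz^k$ (for $\delta=0$ it is the identity). For such $h$ and parameters $\lambda,\gamma,\tau\neq0,\delta$, put $$J_h(z)=1+\frac{1}{\tau}\Big[(1-\lambda)(1-\gamma)\frac{\mathcal{R}^\delta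 h(z)}{z}+(\lambda(\gamma+1)+\gamma)(\mathcal{R}^\delta h)'(z)+\lambda\gamma\big(z(\mathcal{R}^\delta h)''(z)-2\big)-1\Big].$$ For $0\le\beta<1$, $\Theta_{\Sigma}(\tau,\lambda,\gamma,\delta;\beta)$ is the set of $f\in\Sigma$ such that $\operatorname{Re}J_f(z)>\beta$ for all $z\in\mathbb{U}$ and $\operatorname{Re}J_g(w)>\beta$ for all $w\in\mathbb{U}$, where $g$ is the extension of $f^{-1}$ to $\mathbb{U}$. *)

From Stdlib Require Import Reals Factorial.
From Coquelicot Require Import Coquelicot.
Open Scope C_scope.

Definition in_U (z : C) : Prop := (Cmod z < 1)%R.

Definition normalized_series (h : C -> C) (c : nat -> C) : Prop :=
  c 0%nat = 0 /\ c 1%nat = 1 /\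
  forall z, in_U z -> is_series (fun k => c k * z ^ k) (h z).

(* Sigma: bi-univalent functions.  f is analytic (normalized) and univalent
   in U, and f^{-1} extends to a univalent (analytic, injective) g on U,
   i.e. g(f z) = z whenever z and f z lie in U. *)
Definition univalent_on_U (h : C -> C) : Prop :=
  forall z w, in_U z -> in_U w -> h z = h w -> z = w.

Definition extends_inverse (f g : C -> C) : Prop :=
  forall z, in_U z -> in_U (f z) -> g (f z) = z.

Definition bi_univalent (f : C -> C) (a : nat -> C) (g : C -> C) (b : nat -> C)
  : Prop :=
  normalized_series f a /\ univalent_on_U f /\
  normalized_series g b /\ univalent_on_U g /\ extends_inverse f g.

(* Coefficients of the Ruscheweyh derivative R^delta h:
   R^delta h (z) = z + sum_{k>=2} Gamma(delta+k)/(Gamma(k) Gamma(delta+1)) c_k z^k,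
   with Gamma(n) = (n-1)! at positive integers. *)
Definition rusch_coef (delta : nat) (c : nat -> C) (k : nat) : C :=
  match k with
  | 0%nat => 0
  | 1%nat => 1
  | _ => RtoC (INR (fact (delta + k - 1)) /
                (INR (fact (k - 1)) * INR (fact delta)))%R * c k
  end.

(* J_h(z), given the values R = R^delta h(z), R1 = (R^delta h)'(z),
   R2 = (R^delta h)''(z). *)
Definition J_value (tau : C) (lam gam : R) (z Rz R1 R2 : C) : C :=
  1 + / tau *
    ( RtoC ((1 - lam) * (1 - gam))%R * (Rz / z)
    + RtoC (lam * (gam + 1) + gam)%R * R1
    + RtoC (lam * gam)%R * (z * R2 - 2)
    - 1 ).

(* Re J_h(z) > beta for all z in U (z <> 0: at z = 0 the term R^delta h(z)/z
   is understood by its removable singularity). *)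
Definition J_condition (tau : C) (lam gam : R) (delta : nat) (beta : R)
  (c : nat -> C) : Prop :=
  exists Rh Rh1 Rh2 : C -> C,
    forall z, in_U z ->
      is_series (fun k => rusch_coef delta c k * z ^ k) (Rh z) /\
      is_derive Rh z (Rh1 z) /\ is_derive Rh1 z (Rh2 z) /\
      (z <> 0 -> (beta < Re (J_value tau lam gam z (Rh z) (Rh1 z) (Rh2 z)))%R).

Definition Theta_Sigma (tau : C) (lam gam : R) (delta : nat) (beta : R)
  (f : C -> C) (a : nat -> C) : Prop :=
  exists (g : C -> C) (b : nat -> C),
    bi_univalent f a g b /\
    J_condition tau lam gam delta beta a /\
    J_condition tau lam gam delta beta b.

(** For [h = f] and [h = g] (with [δ = 0]), [J_h] is a power series
    [1 + Σ_{k ≥ 1} P_k c_{k+1} z^k / τ], where [c] are the coefficients of [h] and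
    [P_k = (1-λ)(1-γ) + (λ(γ+1)+γ)(k+1) + λγ k(k+1)]; in particular [P_1 = 1+λ+γ+5λγ] and
    [P_2 = 1+2(λ+γ+5λγ)].  Since [Re J_h > β], Carathéodory's lemma gives
    [P_k |c_{k+1}| ≤ 2|τ|(1-β)].  For [f] this bounds [|a_2|] and [|a_3|].  Comparing
    coefficients in [g(f(z)) = z] gives [b_3 = 2a_2² - a_3], so
    [2 P_2 |a_2|² ≤ P_2 |a_3| + P_2 |b_3| ≤ 4|τ|(1-β)].

    Carathéodory's lemma is proved without integration: for [p = Σ e_m z^m] and the [N]-th
    roots of unity [ω^j], the sums [Σ_j ω^{qj} p(rω^j)] pick out [N e_m r^m] for
    [m ≡ -q (mod N)], so the positivity of [Re p - β] on the circle [|z| = r] bounds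
    [|e_k| r^k] by [2(1-β)] up to aliasing terms that vanish as [N → ∞]; then [r → 1]. *)

From Stdlib Require Import Reals Factorial Lra Lia.
From Coquelicot Require Import Coquelicot.

Lemma Rle_pow_le_1 (x : R) (m n : nat) :
  0 <= x <= 1 -> (m <= n)%nat -> x ^ n <= x ^ m.
Proof.
  intros Hx Hmn. replace n with (m + (n - m))%nat by lia. rewrite pow_add.
  assert (0 <= x ^ m) by (apply pow_le; lra).
  assert (x ^ (n - m) <= 1 ^ (n - m)) by (apply pow_incr; lra).
  rewrite pow1 in *. nra.
Qed.

Lemma le_of_le_add_geom (x c K Q : R) :
  0 <= Q < 1 -> (forall n, x <= c + K * Q ^ n) -> x <= c.
Proof.
  intros HQ Hx.
  assert (Hlim : is_lim_seq (fun n => c + K * Q ^ n) c).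
  { replace (Finite c) with (Finite (c + K * 0)) by (f_equal; ring).
    apply is_lim_seq_plus'; [apply is_lim_seq_const|].
    apply (is_lim_seq_scal_l _ K 0), is_lim_seq_geom. rewrite Rabs_pos_eq; lra. }
  exact (is_lim_seq_le _ _ x c Hx (is_lim_seq_const x) Hlim).
Qed.

Lemma pow_1_minus_ge (h : R) (k : nat) :
  0 <= h <= 1 -> 1 - INR k * h <= (1 - h) ^ k.
Proof.
  intros Hh. induction k as [|k IH]; [simpl; lra|].
  rewrite S_INR. simpl.
  assert ((1 - h) * (1 - INR k * h) <= (1 - h) * (1 - h) ^ k)
    by (apply Rmult_le_compat_l; lra).
  assert (0 <= INR k * h * h) by (pose proof (pos_INR k); apply Rmult_le_pos; nra).
  nra.
Qed.

Lemma le_of_forall_lt_1_mul_pow (x c : R) (k : nat) :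
  0 <= x -> (forall r, 0 < r < 1 -> x * r ^ k <= c) -> x <= c.
Proof.
  intros Hx H.
  apply (le_of_le_add_geom x c (x * INR k / 2) (1 / 2)); [lra|]. intros n.
  assert (Hh : 0 < (1 / 2) ^ S n <= 1 / 2).
  { split; [apply pow_lt; lra|].
    pose proof (Rle_pow_le_1 (1 / 2) 0 n ltac:(lra) ltac:(lia)).
    rewrite <- tech_pow_Rmult. lra. }
  specialize (H (1 - (1 / 2) ^ S n) ltac:(lra)).
  pose proof (pow_1_minus_ge ((1 / 2) ^ S n) k ltac:(lra)) as Hb.
  replace (1 - (1 - (1 / 2) ^ S n)) with ((1 / 2) ^ S n) in * by ring.
  assert (x * (1 - INR k * (1 / 2) ^ S n) <= c).
  { eapply Rle_trans; [apply Rmult_le_compat_l; [exact Hx | exact Hb] | exact H]. }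
  simpl in *. lra.
Qed.

Lemma ex_series_square_geom (q : R) : 0 < q < 1 ->
  ex_series (fun m => (INR m + 2) ^ 2 * q ^ m).
Proof.
  intros Hq.
  assert (Hpos : forall m, 0 < (INR m + 2) ^ 2 * q ^ m).
  { intros m. pose proof (pos_INR m).
    apply Rmult_lt_0_compat; apply pow_lt; lra. }
  apply (ex_series_ext (fun m => Rabs ((INR m + 2) ^ 2 * q ^ m))).
  { intros n. apply Rabs_pos_eq, Rlt_le, Hpos. }
  apply (ex_series_DAlembert _ q); [lra | intros n; specialize (Hpos n); lra |].
  assert (Hinv : is_lim_seq (fun n => / (INR n + 2)) 0).
  { replace (Finite 0) with (Rbar_inv p_infty) by reflexivity.
    apply is_lim_seq_inv; [| discriminate].
    eapply is_lim_seq_plus; [apply is_lim_seq_INR | apply is_lim_seq_const | constructor]. }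
  assert (Hratio : is_lim_seq (fun n => (1 + / (INR n + 2)) * (1 + / (INR n + 2)) * q) (1 * 1 * q)).
  { pose proof (is_lim_seq_plus' _ _ 1 0 (is_lim_seq_const 1) Hinv) as H1.
    rewrite Rplus_0_r in H1.
    apply is_lim_seq_mult'; [apply is_lim_seq_mult'; exact H1 | apply is_lim_seq_const]. }
  rewrite !Rmult_1_l in Hratio.
  refine (is_lim_seq_ext _ _ _ _ Hratio). intros n.
  pose proof (pos_INR n). pose proof (Hpos n). pose proof (Hpos (S n)).
  rewrite Rabs_pos_eq by (apply Rlt_le, Rdiv_lt_0_compat; lra).
  rewrite S_INR. simpl. field. split; [apply pow_nonzero |]; lra.
Qed.

Open Scope C_scope.

(** * Finite sums and roots of unity *)

Fixpoint csum (f : nat -> C) (n : nat) : C :=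
  match n with 0%nat => 0 | S n => csum f n + f n end.

Lemma csum_ext (f g : nat -> C) (n : nat) :
  (forall j, (j < n)%nat -> f j = g j) -> csum f n = csum g n.
Proof.
  induction n as [|n IH]; intros H; simpl; [reflexivity|].
  rewrite IH, H; [reflexivity | lia | intros; apply H; lia].
Qed.

Lemma csum_const (x : C) (n : nat) : csum (fun _ => x) n = RtoC (INR n) * x.
Proof.
  induction n as [|n IH]; simpl csum; [simpl; ring|].
  rewrite IH, S_INR, RtoC_plus. ring.
Qed.

Lemma csum_geom (x : C) (n : nat) : (x - 1) * csum (fun j => x ^ j) n = x ^ n - 1.
Proof.
  induction n as [|n IH]; simpl csum; [simpl; ring|].
  rewrite Cmult_plus_distr_l, IH. simpl. ring.
Qed.

Lemma csum_Re_sub_mul_pow (h : nat -> C) (b : R) (w : C) (n : nat) :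
  csum (fun j => RtoC (Re (h j) - b) * w ^ j) n =
  / 2 * (csum (fun j => w ^ j * h j) n + Cconj (csum (fun j => Cconj w ^ j * h j) n))
  - RtoC b * csum (fun j => w ^ j) n.
Proof.
  induction n as [|n IH]; cbn [csum].
  - replace (Cconj 0) with (RtoC 0) by (apply injective_projections; simpl; ring). ring.
  - rewrite IH, Cplus_conj, Cmult_conj, Cpow_conj, Cconj_conj, RtoC_minus, re_alt. field.
Qed.

Lemma Cmod_csum_Re_sub_mul_pow_le (h : nat -> C) (b : R) (w : C) (n : nat) :
  Cmod w = 1%R -> (forall j, (j < n)%nat -> (b < Re (h j))%R) ->
  (Cmod (csum (fun j => RtoC (Re (h j) - b) * w ^ j)%C n) <= Re (csum h n) - INR n * b)%R.
Proof.
  intros Hw Hh. induction n as [|n IH]; cbn [csum].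
  - rewrite Cmod_0. simpl. lra.
  - eapply Rle_trans; [apply Cmod_triangle|].
    pose proof (Hh n ltac:(lia)). pose proof (IH ltac:(intros; apply Hh; lia)).
    rewrite re_plus, S_INR, Cmod_mult, Cmod_pow, Hw, pow1, Cmod_R, Rabs_pos_eq by lra.
    lra.
Qed.

Definition root_unity (N : nat) : C := (cos (2 * PI / INR N), sin (2 * PI / INR N)).

Lemma root_unity_pow (N n : nat) :
  root_unity N ^ n = (cos (INR n * (2 * PI / INR N)), sin (INR n * (2 * PI / INR N))).
Proof.
  induction n as [|n IH].
  - simpl. rewrite Rmult_0_l, cos_0, sin_0. reflexivity.
  - rewrite Cpow_S, IH, S_INR, Rmult_plus_distr_r, Rmult_1_l, Rplus_comm, cos_plus, sin_plus.
    apply injective_projections; simpl; ring.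
Qed.

Lemma Cmod_root_unity_pow (N n : nat) : Cmod (root_unity N ^ n) = 1%R.
Proof.
  rewrite root_unity_pow. unfold Cmod. simpl.
  rewrite !Rmult_1_r, <- !Rsqr_def, Rplus_comm, sin2_cos2. apply sqrt_1.
Qed.

Lemma root_unity_pow_N (N : nat) : (0 < N)%nat -> root_unity N ^ N = 1.
Proof.
  intros HN. rewrite root_unity_pow.
  replace (INR N * (2 * PI / INR N))%R with (2 * PI)%R
    by (field; apply not_0_INR; lia).
  rewrite cos_2PI, sin_2PI. reflexivity.
Qed.

Lemma root_unity_pow_neq_1 (N n : nat) : (0 < n < N)%nat -> root_unity N ^ n <> 1.
Proof.
  intros Hn E. rewrite root_unity_pow in E. apply (f_equal fst) in E. simpl in E.
  set (x := (INR n * (2 * PI / INR N) / 2)%R).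
  assert (HnN : (0 < INR n < INR N)%R) by (split; [apply lt_0_INR | apply lt_INR]; lia).
  assert (Hx : (0 < x < PI)%R).
  { pose proof PI_RGT_0. unfold x.
    replace (INR n * (2 * PI / INR N) / 2)%R with (PI * (INR n / INR N))%R by (field; lra).
    assert (0 < INR n / INR N < 1)%R.
    { split; [apply Rdiv_lt_0_compat; lra|].
      apply (Rmult_lt_reg_r (INR N)); [lra|]. unfold Rdiv. rewrite Rmult_assoc, Rinv_l; lra. }
    split; nra. }
  pose proof (sin_gt_0 _ (proj1 Hx) (proj2 Hx)).
  replace (INR n * (2 * PI / INR N))%R with (2 * x)%R in E by (unfold x; field; lra).
  rewrite cos_2a_sin in E. nra.
Qed.

Lemma root_unity_pow_mod (N p : nat) : (0 < N)%nat -> root_unity N ^ p = root_unity N ^ (p mod N).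
Proof.
  intros HN. rewrite (Nat.div_mod_eq p N) at 1.
  rewrite Cpow_add_r, Cpow_mult_r, root_unity_pow_N, Cpow_1_l by exact HN. ring.
Qed.

Lemma csum_root_unity_div (N p : nat) : (0 < N)%nat -> (p mod N = 0)%nat ->
  csum (fun j => (root_unity N ^ p) ^ j) N = RtoC (INR N).
Proof.
  intros HN Hp. rewrite root_unity_pow_mod, Hp by exact HN.
  rewrite <- (Cmult_1_r (INR N)), <- csum_const. apply csum_ext. intros. apply Cpow_1_l.
Qed.

Lemma csum_root_unity_ndiv (N p : nat) : (0 < N)%nat -> (p mod N <> 0)%nat ->
  csum (fun j => (root_unity N ^ p) ^ j) N = 0.
Proof.
  intros HN Hp. set (x := root_unity N ^ p).
  assert (Hx1 : x - 1 <> 0).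
  { intros E. apply (root_unity_pow_neq_1 N (p mod N)).
    - pose proof (Nat.mod_upper_bound p N ltac:(lia)). lia.
    - rewrite <- root_unity_pow_mod by exact HN. fold x.
      replace x with (x - 1 + 1) by ring. rewrite E. ring. }
  assert (HxN : x ^ N = 1).
  { unfold x. rewrite <- Cpow_mult_r, Nat.mul_comm, Cpow_mult_r, root_unity_pow_N by exact HN.
    apply Cpow_1_l. }
  replace (csum (fun j => x ^ j) N) with (/ (x - 1) * ((x - 1) * csum (fun j => x ^ j) N))
    by (field; exact Hx1).
  rewrite csum_geom, HxN. ring.
Qed.

Lemma conj_root_unity (N : nat) : (0 < N)%nat -> Cconj (root_unity N) = root_unity N ^ (N - 1).
Proof.
  intros HN.
  assert (E1 : root_unity N * Cconj (root_unity N) = 1).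
  { rewrite <- Cmod2_conj, <- (Cpow_1_r (root_unity N)), Cmod_root_unity_pow. simpl.
    apply injective_projections; simpl; ring. }
  assert (E2 : root_unity N * root_unity N ^ (N - 1) = 1).
  { rewrite <- Cpow_S. replace (S (N - 1)) with N by lia. apply root_unity_pow_N, HN. }
  transitivity (Cconj (root_unity N) * (root_unity N * root_unity N ^ (N - 1))).
  - rewrite E2. ring.
  - rewrite Cmult_assoc, (Cmult_comm (Cconj _)), E1. ring.
Qed.

(** * Power series *)

Lemma Cnorm_Cmod (x : C) : @norm C_AbsRing C_NormedModule x = Cmod x.
Proof. reflexivity. Qed.

Lemma Cmod_le_of_sub_le (x y : C) (T : R) :
  (Cmod (x - y) <= T)%R -> (Cmod x <= Cmod y + T)%R /\ (Cmod y <= Cmod x + T)%R.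
Proof.
  intros H. split.
  - replace x with (y + (x - y)) at 1 by ring.
    eapply Rle_trans; [apply Cmod_triangle | lra].
  - replace y with (x - (x - y)) at 1 by ring.
    eapply Rle_trans; [apply Cmod_triangle | rewrite Cmod_opp; lra].
Qed.

Lemma is_series_C_ext (u v : nat -> C) (lu lv : C) :
  (forall n, u n = v n) -> lu = lv -> is_series u lu -> is_series v lv.
Proof. intros Huv <-. apply is_series_ext, Huv. Qed.

(* Coquelicot's [plus], [opp] and [scal] on [C] are convertible to [Cplus], [Copp] and
   [Cmult]; folding them lets [ring] and [field] see the field structure. *)
Ltac Cfold := repeat match goal with
  | |- context [@plus ?G ?a ?b] => progress change (@plus G a b) with (Cplus a b)
  | |- context [@opp ?G ?a] => progress change (@opp G a) with (Copp a)
  | |- context [@scal ?K ?V ?a ?b] => progress change (@scal K V a b) with (Cmult a b)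
  | |- @eq ?T ?x ?y => progress change (@eq C x y)
  end.

Lemma Cmod_series_le (u : nat -> C) (v : nat -> R) (lu : C) (lv : R) :
  is_series u lu -> is_series v lv -> (forall n, Cmod (u n) <= v n)%R -> (Cmod lu <= lv)%R.
Proof.
  intros Hu Hv Huv.
  assert (Hpartial : forall n, (Cmod (sum_n u n) <= sum_n v n)%R).
  { intros n. rewrite <- Cnorm_Cmod. unfold sum_n.
    apply (Rle_trans _ _ _ (@norm_sum_n_m C_AbsRing C_NormedModule u 0 n)).
    apply sum_n_m_le. intros k. apply Huv. }
  assert (Hlim : is_lim_seq (fun n => Cmod (sum_n u n)) (Cmod lu)).
  { exact (filterlim_comp _ _ _ (sum_n u) (@norm C_AbsRing C_NormedModule) _ _ _
             Hu (filterlim_norm lu)). }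
  exact (is_lim_seq_le _ _ (Cmod lu) lv Hpartial Hlim Hv).
Qed.

Lemma is_series_shift (u : nat -> C) (l : C) :
  is_series u l -> is_series (fun k => u (S k)) (l - u 0%nat).
Proof.
  intros H. apply is_series_incr_1.
  refine (is_series_C_ext _ _ _ _ (fun _ => eq_refl) _ H). Cfold. ring.
Qed.

Lemma is_series_delta (x : C) (m0 : nat) :
  is_series (fun m => if Nat.eqb m m0 then x else RtoC 0) x.
Proof.
  revert x. induction m0 as [|m0 IH]; intros x; apply is_series_decr_1; simpl.
  - refine (is_series_C_ext _ _ (RtoC 0) _ (fun _ => eq_refl) _ _); [Cfold; ring|].
    apply (filterlim_ext (fun _ => zero)); [| apply filterlim_const].
    intros n. symmetry. exact (@sum_n_m_const_zero C_AbelianMonoid 0 n).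
  - refine (is_series_C_ext _ _ x _ (fun _ => eq_refl) _ (IH x)). Cfold. ring.
Qed.

Lemma series_terms_bounded (c : nat -> C) (s : R) (l : C) :
  (0 <= s)%R -> is_series (fun k => c k * RtoC s ^ k) l ->
  exists M, forall k, (Cmod (c k) * s ^ k <= M)%R.
Proof.
  intros Hs Hl.
  destruct (filterlim_bounded (sum_n (fun k => c k * RtoC s ^ k))) as [M HM];
    [exists l; exact Hl|].
  exists (2 * M)%R. intros k.
  replace (Cmod (c k) * s ^ k)%R with (Cmod (c k * RtoC s ^ k))
    by (rewrite Cmod_mult, Cmod_pow, Cmod_R, Rabs_pos_eq; lra).
  destruct k as [|k].
  - specialize (HM 0%nat). rewrite sum_O, Cnorm_Cmod in HM.
    pose proof (Cmod_ge_0 (c 0%nat * RtoC s ^ 0)). lra.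
  - pose proof (HM (S k)) as HSk. pose proof (HM k) as Hk.
    rewrite sum_Sn, Cnorm_Cmod in HSk. rewrite Cnorm_Cmod in Hk.
    set (A := sum_n (fun k => c k * RtoC s ^ k) k) in *.
    replace (c (S k) * RtoC s ^ S k) with (plus A (c (S k) * RtoC s ^ S k) - A)
      by (change (A + c (S k) * RtoC s ^ S k - A = c (S k) * RtoC s ^ S k); ring).
    eapply Rle_trans; [apply Cmod_triangle|]. rewrite Cmod_opp. lra.
Qed.

Lemma coef_geometric_bound (c : nat -> C) (M s r : R) :
  (0 < r)%R -> (0 < s)%R -> (forall k, Cmod (c k) * s ^ k <= M)%R ->
  forall j k, (Cmod (c (j + k)%nat) * r ^ k <= M / s ^ j * (r / s) ^ k)%R.
Proof.
  intros Hr Hs HM j k.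
  specialize (HM (j + k)%nat). rewrite pow_add in HM.
  assert (Hsj : (0 < s ^ j)%R) by (apply pow_lt; lra).
  assert (Hsk : (0 < s ^ k)%R) by (apply pow_lt; lra).
  replace ((r / s) ^ k)%R with (r ^ k / s ^ k)%R
    by (unfold Rdiv; rewrite Rpow_mult_distr, pow_inv; reflexivity).
  apply (Rmult_le_reg_r (s ^ j * s ^ k)); [apply Rmult_lt_0_compat; lra|].
  replace (M / s ^ j * (r ^ k / s ^ k) * (s ^ j * s ^ k))%R with (M * r ^ k)%R
    by (field; lra).
  replace (Cmod (c (j + k)%nat) * r ^ k * (s ^ j * s ^ k))%R
    with (Cmod (c (j + k)%nat) * (s ^ j * s ^ k) * r ^ k)%R by ring.
  apply Rmult_le_compat_r; [apply pow_le; lra | exact HM].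
Qed.

Lemma Cmod_pow_add_second_order (z t : C) (m : nat) :
  (Cmod ((z + t) ^ S (S m) - z ^ S (S m) - RtoC (INR (S (S m))) * t * z ^ S m)
   <= (INR m + 2) ^ 2 * Cmod t ^ 2 * (Cmod z + Cmod t) ^ m)%R.
Proof.
  induction m as [|m IH].
  - replace ((z + t) ^ 2 - z ^ 2 - RtoC (INR 2) * t * z ^ 1) with (t * t)
      by (simpl; rewrite RtoC_plus; ring).
    rewrite Cmod_mult. simpl. nra.
  - set (D := (z + t) ^ S (S m) - z ^ S (S m) - RtoC (INR (S (S m))) * t * z ^ S m) in *.
    replace ((z + t) ^ S (S (S m)) - z ^ S (S (S m)) - RtoC (INR (S (S (S m)))) * t * z ^ S (S m))
      with ((z + t) * D + RtoC (INR (S (S m))) * (t * t) * z ^ S m)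
      by (unfold D; rewrite (S_INR (S (S m))), RtoC_plus, !Cpow_S; ring).
    eapply Rle_trans; [apply Cmod_triangle|].
    rewrite !Cmod_mult, Cmod_pow, Cmod_R, Rabs_pos_eq by apply pos_INR.
    pose proof (Cmod_triangle z t). pose proof (Cmod_ge_0 z). pose proof (Cmod_ge_0 t).
    pose proof (Cmod_ge_0 D). pose proof (pos_INR m).
    set (r := (Cmod z + Cmod t)%R) in *.
    assert (Hzr : (Cmod z ^ S m <= r ^ S m)%R) by (apply pow_incr; unfold r; lra).
    assert (Hr : (0 <= r)%R) by (unfold r; lra).
    assert (Hrm : (0 <= r ^ m)%R) by (apply pow_le; lra).
    assert (HD : (Cmod (z + t) * Cmod D <= r * ((INR m + 2) ^ 2 * Cmod t ^ 2 * r ^ m))%R)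
      by (apply Rmult_le_compat; [apply Cmod_ge_0 | lra | lra | lra]).
    rewrite !S_INR. simpl in Hzr, HD |- *.
    assert (0 <= Cmod t * Cmod t * (r * r ^ m))%R
      by (apply Rmult_le_pos; [nra | apply Rmult_le_pos; lra]).
    assert ((INR m + 1 + 1) * (Cmod t * Cmod t) * (Cmod z * Cmod z ^ m)
            <= (INR m + 1 + 1) * (Cmod t * Cmod t) * (r * r ^ m))%R
      by (apply Rmult_le_compat_l; [apply Rmult_le_pos; nra | exact Hzr]).
    nra.
Qed.

Section TermwiseDerivative.

Variables (c : nat -> C) (F : C -> C) (z : C) (r s M : R).
Hypothesis F_series : forall w, in_U w -> is_series (fun k => c k * w ^ k) (F w).
Hypotheses (Hzr : (Cmod z < r)%R) (Hrs : (r < s)%R) (Hs1 : (s < 1)%R).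
Hypothesis c_bound : forall k, (Cmod (c k) * s ^ k <= M)%R.

Lemma ratio_bounds : (0 < r / s < 1)%R.
Proof.
  pose proof (Cmod_ge_0 z).
  split; [apply Rdiv_lt_0_compat; lra|].
  apply (Rmult_lt_reg_r s); [lra|]. unfold Rdiv. rewrite Rmult_assoc, Rinv_l; lra.
Qed.

Lemma ex_series_termwise_derivative : ex_series (fun k => RtoC (INR (S k)) * c (S k) * z ^ k).
Proof.
  pose proof (Cmod_ge_0 z). pose proof ratio_bounds.
  apply (@ex_series_le C_AbsRing C_CompleteNormedModule _
           (fun k => M / s * ((INR k + 2) ^ 2 * (r / s) ^ k))%R).
  2:{ apply (@ex_series_scal_l R_AbsRing R_NormedModule), ex_series_square_geom; lra. }
  intros k.
  rewrite Cnorm_Cmod, !Cmod_mult, Cmod_pow, Cmod_R, Rabs_pos_eq by apply pos_INR.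
  pose proof (coef_geometric_bound c M s r ltac:(lra) ltac:(lra) c_bound 1 k) as Hc.
  rewrite pow_1 in Hc.
  assert (Hzk : (Cmod z ^ k <= r ^ k)%R) by (apply pow_incr; lra).
  assert (Hk : (INR (S k) <= (INR k + 2) ^ 2)%R)
    by (rewrite S_INR; pose proof (pos_INR k); nra).
  pose proof (Cmod_ge_0 (c (S k))). pose proof (pos_INR (S k)).
  assert (0 <= Cmod (c (S k)) * Cmod z ^ k)%R by (apply Rmult_le_pos; [lra | apply pow_le; lra]).
  assert (Cmod (c (S k)) * Cmod z ^ k <= M / s * (r / s) ^ k)%R
    by (eapply Rle_trans; [apply Rmult_le_compat_l | exact Hc]; lra).
  rewrite Rmult_assoc, (Rmult_comm (M / s)), Rmult_assoc.
  apply Rmult_le_compat; lra.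
Qed.

Lemma Cmod_second_order_remainder_le (D : C) :
  is_series (fun k => RtoC (INR (S k)) * c (S k) * z ^ k) D ->
  forall t, (Cmod t <= r - Cmod z)%R ->
  (Cmod (F (z + t) - F z - t * D)
   <= Cmod t ^ 2 * (M / s ^ 2 * Series (fun m => (INR m + 2) ^ 2 * (r / s) ^ m)))%R.
Proof.
  intros HD t Ht.
  pose proof (Cmod_ge_0 t). pose proof (Cmod_ge_0 z). pose proof ratio_bounds.
  assert (Hzt : in_U (z + t)) by (unfold in_U; pose proof (Cmod_triangle z t); lra).
  assert (Hz : in_U z) by (unfold in_U; lra).
  pose proof (is_series_shift _ _ (is_series_shift _ _ (F_series _ Hzt))) as Szt.
  pose proof (is_series_shift _ _ (is_series_shift _ _ (F_series _ Hz))) as Sz.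
  pose proof (is_series_shift _ _ (@is_series_scal C_AbsRing C_NormedModule t _ _ HD)) as StD.
  pose proof (is_series_minus _ _ _ _ (is_series_minus _ _ _ _ Szt Sz) StD) as Srem.
  set (K := (M / s ^ 2)%R).
  apply (Cmod_series_le
    (fun m => c (S (S m)) * ((z + t) ^ S (S m) - z ^ S (S m) - RtoC (INR (S (S m))) * t * z ^ S m))
    (fun m => Cmod t ^ 2 * K * ((INR m + 2) ^ 2 * (r / s) ^ m))%R).
  - refine (is_series_C_ext _ _ _ _ _ _ Srem); [intros m | ]; cbv beta; Cfold.
    + rewrite !Cpow_S. ring.
    + simpl. ring.
  - rewrite <- Rmult_assoc.
    exact (@is_series_scal R_AbsRing R_NormedModule _ _ _
             (Series_correct _ (ex_series_square_geom _ ratio_bounds))).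
  - intros m. cbv beta. rewrite Cmod_mult.
    pose proof (Cmod_pow_add_second_order z t m) as Hpow.
    pose proof (coef_geometric_bound c M s r ltac:(lra) ltac:(lra) c_bound 2 m) as Hc.
    pose proof (Cmod_ge_0 (c (S (S m)))).
    assert (Hzt_r : ((Cmod z + Cmod t) ^ m <= r ^ m)%R) by (apply pow_incr; lra).
    assert (0 <= (INR m + 2) ^ 2 * Cmod t ^ 2)%R by (apply Rmult_le_pos; apply pow2_ge_0).
    eapply Rle_trans; [apply Rmult_le_compat_l; [lra | exact Hpow]|].
    eapply Rle_trans; [apply Rmult_le_compat_l; [lra | apply Rmult_le_compat_l; [lra | exact Hzt_r]]|].
    replace (Cmod (c (S (S m))) * ((INR m + 2) ^ 2 * Cmod t ^ 2 * r ^ m))%R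
      with ((INR m + 2) ^ 2 * Cmod t ^ 2 * (Cmod (c (2 + m)%nat) * r ^ m))%R by (simpl; ring).
    replace (Cmod t ^ 2 * K * ((INR m + 2) ^ 2 * (r / s) ^ m))%R
      with ((INR m + 2) ^ 2 * Cmod t ^ 2 * (K * (r / s) ^ m))%R by ring.
    apply Rmult_le_compat_l; [lra | exact Hc].
Qed.

End TermwiseDerivative.

Lemma is_derive_remainder_le (F : C -> C) (z L : C) : is_derive F z L ->
  forall eps, (0 < eps)%R -> exists delta, (0 < delta)%R /\ forall t : R, (0 < t < delta)%R ->
    (Cmod (F (z + t) - F z - t * L)%C <= eps * t)%R.
Proof.
  intros [_ Hdiff] eps Heps.
  destruct (Hdiff z (fun P H => H) (mkposreal eps Heps)) as [d Hd].
  exists d. split; [apply cond_pos|]. intros t Ht.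
  assert (Hzt : z + RtoC t - z = RtoC t) by ring.
  assert (Hball : @ball (AbsRing_UniformSpace C_AbsRing) z d (z + RtoC t)).
  { change (Cmod (z + RtoC t - z) < d)%R. rewrite Hzt, Cmod_R, Rabs_pos_eq; lra. }
  specialize (Hd _ Hball).
  change (Cmod (F (z + RtoC t) - F z - (z + RtoC t - z) * L)%C
          <= eps * Cmod (z + RtoC t - z)%C)%R in Hd.
  rewrite Hzt, Cmod_R, Rabs_pos_eq in Hd by lra. exact Hd.
Qed.

Lemma derive_eq_of_second_order (F : C -> C) (z L D : C) (K rho : R) :
  is_derive F z L -> (0 < rho)%R ->
  (forall t : R, (0 < t < rho)%R -> (Cmod (F (z + t) - F z - t * D)%C <= K * t ^ 2)%R) ->
  L = D.
Proof.
  intros HL Hrho Hrem.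
  assert (HLD : (Cmod (L - D) <= 0)%R).
  { apply Rle_plus_epsilon. intros eps Heps.
    destruct (is_derive_remainder_le F z L HL (eps / 2) ltac:(lra)) as [d [Hd0 Hd]].
    pose proof (Rabs_pos K).
    set (t := Rmin (Rmin (d / 2) (rho / 2)) (eps / (2 * (Rabs K + 1)))).
    assert (Ht : (0 < t <= Rmin (d / 2) (rho / 2))%R).
    { split; [| apply Rmin_l]. repeat apply Rmin_glb_lt; try lra. apply Rdiv_lt_0_compat; lra. }
    pose proof (Rmin_l (d / 2) (rho / 2)). pose proof (Rmin_r (d / 2) (rho / 2)).
    assert (HKt : (K * t <= eps / 2)%R).
    { apply (Rle_trans _ (Rabs K * t)); [apply Rmult_le_compat_r; [lra | apply Rle_abs]|].
      apply (Rle_trans _ ((Rabs K + 1) * (eps / (2 * (Rabs K + 1))))); [| right; field; lra].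
      apply Rmult_le_compat; [lra | lra | lra | apply Rmin_r]. }
    specialize (Hd t ltac:(lra)). specialize (Hrem t ltac:(lra)).
    assert (Hsplit : RtoC t * (L - D) =
      (F (z + RtoC t) - F z - RtoC t * D) - (F (z + RtoC t) - F z - RtoC t * L)) by ring.
    assert (Hprod : (t * Cmod (L - D) <= t * eps)%R).
    { replace (t * Cmod (L - D))%R with (Cmod (RtoC t * (L - D)))
        by (rewrite Cmod_mult, Cmod_R, Rabs_pos_eq; lra).
      rewrite Hsplit. eapply Rle_trans; [apply Cmod_triangle|]. rewrite Cmod_opp.
      simpl in Hrem. nra. }
    apply Rmult_le_reg_l in Hprod; lra. }
  assert (HLD0 : L - D = 0) by (apply Cmod_eq_0; pose proof (Cmod_ge_0 (L - D)); lra).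
  transitivity (L - D + D); [ring | rewrite HLD0; ring].
Qed.

Lemma is_derive_power_series (c : nat -> C) (F : C -> C) (z L : C) :
  (forall w, in_U w -> is_series (fun k => c k * w ^ k) (F w)) ->
  in_U z -> is_derive F z L ->
  is_series (fun k => RtoC (INR (S k)) * c (S k) * z ^ k) L.
Proof.
  intros F_series Hz HL. unfold in_U in Hz. pose proof (Cmod_ge_0 z).
  set (r := ((Cmod z + 1) / 2)%R). set (s := ((r + 1) / 2)%R).
  assert (Hs : in_U (RtoC s)) by (unfold in_U; rewrite Cmod_R, Rabs_pos_eq; unfold s, r; lra).
  destruct (series_terms_bounded c s (F s) ltac:(unfold s, r; lra) (F_series _ Hs)) as [M HM].
  destruct (ex_series_termwise_derivative c z r s M ltac:(unfold r; lra) ltac:(unfold s, r; lra)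
              ltac:(unfold s, r; lra) HM) as [D HD].
  replace L with D; [exact HD|]. symmetry.
  apply (derive_eq_of_second_order F z L D
           (M / s ^ 2 * Series (fun m => (INR m + 2) ^ 2 * (r / s) ^ m))%R (r - Cmod z)%R);
    [exact HL | unfold r; lra |].
  intros t Ht.
  match goal with |- (_ <= ?K * t ^ 2)%R =>
    replace (K * t ^ 2)%R with (Cmod (RtoC t) ^ 2 * K)%R
      by (rewrite Cmod_R, Rabs_pos_eq; [ring | lra]) end.
  apply (Cmod_second_order_remainder_le c F z r s M); try (unfold s, r; lra); try assumption.
  rewrite Cmod_R, Rabs_pos_eq; lra.
Qed.

(** * Carathéodory's coefficient bound *)

Lemma eq_of_add_mod_0 (N m m0 p : nat) : (m < N)%nat -> (m0 < N)%nat ->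
  ((m + p) mod N = 0)%nat -> ((m0 + p) mod N = 0)%nat -> m = m0.
Proof.
  intros Hm Hm0 Hmp Hm0p.
  pose proof (Nat.div_mod_eq (m + p) N) as D1. pose proof (Nat.div_mod_eq (m0 + p) N) as D2.
  rewrite Hmp in D1. rewrite Hm0p in D2.
  set (q1 := ((m + p) / N)%nat) in *. set (q2 := ((m0 + p) / N)%nat) in *.
  destruct (Nat.lt_total q1 q2) as [Hq|[Hq|Hq]]; [| subst q1; lia |];
    assert (N * S (Nat.min q1 q2) <= N * Nat.max q1 q2)%nat by (apply Nat.mul_le_mono_l; lia);
    lia.
Qed.

Lemma mod_pred_mul_neq_0 (N k : nat) : (0 < k < N)%nat -> ((N - 1) * k mod N <> 0)%nat.
Proof.
  intros Hk.
  replace ((N - 1) * k)%nat with ((N - k) + (k - 1) * N)%nat by nia.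
  rewrite Nat.Div0.mod_add, Nat.mod_small; lia.
Qed.

Definition sample_dft (H : C -> C) (r : R) (N p : nat) : C :=
  csum (fun j => (root_unity N ^ p) ^ j * H (RtoC r * root_unity N ^ j)) N.

Section SampleDft.

Variables (e : nat -> C) (H : C -> C) (r : R) (N : nat).
Hypothesis H_series : forall z, in_U z -> z <> 0 -> is_series (fun m => e m * z ^ m) (H z).
Hypothesis Hr : (0 < r < 1)%R.
Hypothesis HN : (0 < N)%nat.

Lemma sample_point_in_U (j : nat) :
  in_U (RtoC r * root_unity N ^ j) /\ RtoC r * root_unity N ^ j <> 0.
Proof.
  assert (E : Cmod (RtoC r * root_unity N ^ j) = r).
  { rewrite Cmod_mult, Cmod_root_unity_pow, Cmod_R, Rabs_pos_eq; lra. }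
  split; [unfold in_U; lra|].
  intros Z. rewrite Z, Cmod_0 in E. lra.
Qed.

Lemma is_series_partial_sample_dft (p n : nat) :
  is_series (fun m => e m * RtoC r ^ m * csum (fun j => (root_unity N ^ (m + p)) ^ j) n)
            (csum (fun j => (root_unity N ^ p) ^ j * H (RtoC r * root_unity N ^ j)) n).
Proof.
  induction n as [|n IH]; cbn [csum].
  - refine (is_series_C_ext _ _ _ _ _ _ (is_series_delta 0 0)); [|reflexivity].
    intros [|m]; simpl; ring.
  - destruct (sample_point_in_U n) as [Hin Hne].
    pose proof (is_series_plus _ _ _ _ IH
      (@is_series_scal C_AbsRing C_NormedModule ((root_unity N ^ p) ^ n) _ _
         (H_series _ Hin Hne))) as Hsum.
    refine (is_series_C_ext _ _ _ _ _ _ Hsum); [intros m|]; cbv beta; Cfold; [|reflexivity].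
    rewrite Cpow_mult_l, <- !Cpow_mult_r.
    replace (root_unity N ^ ((m + p) * n)) with (root_unity N ^ (n * m) * root_unity N ^ (p * n))
      by (rewrite <- Cpow_add_r; f_equal; ring).
    ring.
Qed.

Lemma is_series_sample_dft (p : nat) :
  is_series (fun m => if Nat.eqb ((m + p) mod N) 0 then RtoC (INR N) * e m * RtoC r ^ m else RtoC 0)
            (sample_dft H r N p).
Proof.
  refine (is_series_C_ext _ _ _ _ _ _ (is_series_partial_sample_dft p N)); [intros m|reflexivity].
  destruct (Nat.eqb_spec ((m + p) mod N) 0) as [Hd|Hd].
  - rewrite csum_root_unity_div by assumption. ring.
  - rewrite csum_root_unity_ndiv by assumption. ring.
Qed.

Variables (B Q : R).
Hypothesis HQ : (0 <= Q < 1)%R.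
Hypothesis e_bound : forall m, (Cmod (e m) * r ^ m <= B * (Q ^ m * Q ^ m))%R.

Lemma sample_dft_approx (p m0 : nat) : (m0 < N)%nat -> ((m0 + p) mod N = 0)%nat ->
  (Cmod (sample_dft H r N p - RtoC (INR N) * e m0 * RtoC r ^ m0)
   <= INR N * B * Q ^ N / (1 - Q))%R.
Proof.
  intros Hm0 Hm0p.
  assert (HB : (0 <= B)%R).
  { specialize (e_bound 0%nat). simpl in e_bound. pose proof (Cmod_ge_0 (e 0%nat)). lra. }
  pose proof (pos_INR N).
  apply (Cmod_series_le _ (fun m => INR N * B * Q ^ N * Q ^ m)%R _ _
           (is_series_minus _ _ _ _ (is_series_sample_dft p)
              (is_series_delta (RtoC (INR N) * e m0 * RtoC r ^ m0) m0))).
  { apply (@is_series_scal R_AbsRing R_NormedModule), is_series_geom. rewrite Rabs_pos_eq; lra. }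
  intros m. Cfold.
  assert (Hv : (0 <= INR N * B * Q ^ N * Q ^ m)%R).
  { repeat apply Rmult_le_pos; try lra; apply pow_le; lra. }
  destruct (Nat.eqb_spec m m0) as [->|Hne].
  - rewrite (proj2 (Nat.eqb_eq _ _) Hm0p), Cplus_opp_r, Cmod_0. exact Hv.
  - destruct (Nat.eqb_spec ((m + p) mod N) 0) as [Hd|Hd].
    + assert (HmN : (N <= m)%nat).
      { destruct (Nat.le_gt_cases N m) as [?|HmN]; [assumption|].
        exfalso. apply Hne, (eq_of_add_mod_0 N m m0 p); assumption. }
      rewrite Copp_0, Cplus_0_r, !Cmod_mult, Cmod_pow, Cmod_R, Cmod_R, !Rabs_pos_eq by lra.
      pose proof (Rle_pow_le_1 Q N m ltac:(lra) HmN).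
      assert (0 <= Q ^ m)%R by (apply pow_le; lra).
      specialize (e_bound m).
      assert (B * (Q ^ m * Q ^ m) <= B * Q ^ N * Q ^ m)%R.
      { rewrite <- Rmult_assoc. apply Rmult_le_compat_r; [lra|].
        apply Rmult_le_compat_l; lra. }
      rewrite !Rmult_assoc, <- (Rmult_assoc B). apply Rmult_le_compat_l; lra.
    + rewrite Copp_0, Cplus_0_r, Cmod_0. exact Hv.
Qed.

End SampleDft.

(* The left-hand side is [2 Σ_j (Re H(rω^j) - b) ω^{-jk}], a combination of the nonnegative
   weights [Re H(rω^j) - b] with unimodular factors. *)
Lemma Cmod_sample_dft_conj_le (H : C -> C) (b r : R) (N k : nat) :
  (forall z, in_U z -> z <> 0 -> (b < Re (H z))%R) -> (0 < r < 1)%R -> (0 < k < N)%nat ->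
  (Cmod (sample_dft H r N ((N - 1) * k) + Cconj (sample_dft H r N k))
   <= 2 * (Re (sample_dft H r N 0) - INR N * b))%R.
Proof.
  intros HRe Hr Hk.
  assert (HN : (0 < N)%nat) by lia.
  set (w := root_unity N ^ ((N - 1) * k)).
  assert (Hcw : Cconj w = root_unity N ^ k).
  { unfold w. rewrite Cpow_mult_r, <- conj_root_unity, Cpow_conj, Cconj_conj by exact HN.
    reflexivity. }
  assert (HW : sample_dft H r N ((N - 1) * k) + Cconj (sample_dft H r N k)
    = 2 * csum (fun j => RtoC (Re (H (RtoC r * root_unity N ^ j)) - b) * w ^ j) N).
  { rewrite csum_Re_sub_mul_pow, Hcw.
    unfold w. rewrite csum_root_unity_ndiv by (try apply mod_pred_mul_neq_0; lia).
    unfold sample_dft. field. }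
  rewrite HW, Cmod_mult, Cmod_R, Rabs_pos_eq by lra.
  apply Rmult_le_compat_l; [lra|].
  replace (sample_dft H r N 0) with (csum (fun j => H (RtoC r * root_unity N ^ j)) N).
  - apply Cmod_csum_Re_sub_mul_pow_le; [apply Cmod_root_unity_pow|].
    intros j _. apply HRe; apply (sample_point_in_U r N Hr).
  - apply csum_ext. intros j _. simpl. rewrite Cpow_1_l. ring.
Qed.

Lemma caratheodory_approx (e : nat -> C) (H : C -> C) (b r B Q : R) (k N : nat) :
  (forall z, in_U z -> z <> 0 -> is_series (fun m => e m * z ^ m) (H z)) ->
  (forall z, in_U z -> z <> 0 -> (b < Re (H z))%R) ->
  e 0%nat = 1 -> (0 < k < N)%nat -> (0 < r < 1)%R -> (0 <= Q < 1)%R ->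
  (forall m, (Cmod (e m) * r ^ m <= B * (Q ^ m * Q ^ m))%R) ->
  (Cmod (e k) * r ^ k
   <= 2 * (1 - b) + 4 * B * Q ^ N / (1 - Q) + B * (Q ^ (N - k) * Q ^ (N - k)))%R.
Proof.
  intros HS HRe He0 Hk Hr HQ HB.
  assert (HN : (0 < N)%nat) by lia.
  assert (HNr : (0 < INR N)%R) by (apply lt_0_INR; lia).
  set (A := sample_dft H r N).
  set (T := (INR N * B * Q ^ N / (1 - Q))%R).
  assert (HCmod : forall m,
    Cmod (RtoC (INR N) * e m * RtoC r ^ m) = (INR N * (Cmod (e m) * r ^ m))%R).
  { intros m. rewrite !Cmod_mult, Cmod_pow, !Cmod_R, !Rabs_pos_eq by lra. ring. }
  pose proof (sample_dft_approx e H r N HS Hr HN B Q HQ HB) as Happrox. fold A T in Happrox.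
  assert (Hk' : (INR N * (Cmod (e k) * r ^ k) <= Cmod (A ((N - 1) * k)%nat) + T)%R).
  { rewrite <- HCmod. apply (Cmod_le_of_sub_le (A ((N - 1) * k)%nat)), Happrox; [lia|].
    replace (k + (N - 1) * k)%nat with (k * N)%nat by nia. apply Nat.Div0.mod_mul. }
  assert (HNk : (Cmod (A k) <= INR N * (B * (Q ^ (N - k) * Q ^ (N - k))) + T)%R).
  { pose proof (Rmult_le_compat_l (INR N) _ _ ltac:(lra) (HB (N - k)%nat)).
    rewrite <- HCmod in *.
    assert (Cmod (A k) <= Cmod (RtoC (INR N) * e (N - k)%nat * RtoC r ^ (N - k)) + T)%R; [|lra].
    apply (Cmod_le_of_sub_le (A k)), Happrox; [lia|].
    replace (N - k + k)%nat with N by lia. apply Nat.Div0.mod_same. }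
  assert (H0 : (Re (A 0%nat) <= INR N + T)%R).
  { pose proof (Happrox 0%nat 0%nat HN (Nat.Div0.mod_0_l N)) as H0.
    rewrite He0 in H0. simpl in H0. rewrite Cmult_1_r, Cmult_1_r in H0.
    pose proof (re_le_Cmod (A 0%nat - RtoC (INR N))) as Hre.
    apply Rabs_le_between in Hre. unfold Re in *. simpl in Hre. lra. }
  assert (Hconj : (Cmod (A ((N - 1) * k)%nat) <= 2 * (Re (A 0%nat) - INR N * b) + Cmod (A k))%R).
  { pose proof (Cmod_sample_dft_conj_le H b r N k HRe Hr Hk) as Hpos. fold A in Hpos.
    rewrite <- (Cmod_conj (A k)).
    refine (Rle_trans _ _ _ (proj2 (Cmod_le_of_sub_le _ _ _ (Rle_refl _))) _).
    replace (A ((N - 1) * k)%nat + Cconj (A k) - A ((N - 1) * k)%nat) with (Cconj (A k))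
      by ring. lra. }
  apply (Rmult_le_reg_l (INR N)); [exact HNr|].
  replace (INR N * (2 * (1 - b) + 4 * B * Q ^ N / (1 - Q) + B * (Q ^ (N - k) * Q ^ (N - k))))%R
    with (2 * INR N * (1 - b) + 4 * T + INR N * (B * (Q ^ (N - k) * Q ^ (N - k))))%R
    by (unfold T; field; lra).
  lra.
Qed.

(* The decay rate is written as [Q ^ m * Q ^ m] so that one factor [Q ^ m] is left over to sum
   the aliased coefficients in [sample_dft_approx]. *)
Lemma power_series_coef_decay (e : nat -> C) (H : C -> C) (r : R) :
  (forall z, in_U z -> z <> 0 -> is_series (fun m => e m * z ^ m) (H z)) -> (0 < r < 1)%R ->
  exists M Q, (0 <= M)%R /\ (0 <= Q < 1)%R /\
    forall m, (Cmod (e m) * r ^ m <= M * (Q ^ m * Q ^ m))%R.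
Proof.
  intros HS Hr.
  set (s := ((1 + r) / 2)%R).
  assert (Hs : in_U (RtoC s) /\ RtoC s <> 0).
  { split; [unfold in_U; rewrite Cmod_R, Rabs_pos_eq; unfold s; lra|].
    intros E. apply (f_equal fst) in E. simpl in E. unfold s in E. lra. }
  destruct (series_terms_bounded e s (H s) ltac:(unfold s; lra) (HS _ (proj1 Hs) (proj2 Hs)))
    as [M HM].
  assert (Hq : (0 < r / s < 1)%R).
  { unfold s. split; [apply Rdiv_lt_0_compat; lra|].
    apply (Rmult_lt_reg_r ((1 + r) / 2)); [lra|]. unfold Rdiv at 1.
    rewrite Rmult_assoc, Rinv_l; lra. }
  set (Q := sqrt (r / s)).
  assert (HQQ : (Q * Q = r / s)%R) by (apply sqrt_sqrt; lra).
  exists M, Q. split; [| split].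
  - specialize (HM 0%nat). pose proof (Cmod_ge_0 (e 0%nat)). simpl in HM. lra.
  - assert (0 <= Q)%R by apply sqrt_pos. nra.
  - intros m.
    pose proof (coef_geometric_bound e M s r ltac:(lra) ltac:(unfold s; lra) HM 0 m) as G.
    rewrite <- Rpow_mult_distr, HQQ. simpl in G. rewrite Rdiv_1_r in G. exact G.
Qed.

Lemma caratheodory_coef_bound (e : nat -> C) (H : C -> C) (b : R) (k : nat) :
  (forall z, in_U z -> z <> 0 -> is_series (fun m => e m * z ^ m) (H z)) ->
  (forall z, in_U z -> z <> 0 -> (b < Re (H z))%R) ->
  e 0%nat = 1 -> (0 < k)%nat -> (Cmod (e k) <= 2 * (1 - b))%R.
Proof.
  intros HS HRe He0 Hk.
  apply (le_of_forall_lt_1_mul_pow _ _ k (Cmod_ge_0 _)). intros r Hr.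
  destruct (power_series_coef_decay e H r HS Hr) as [M [Q [HM0 [HQ HB]]]].
  apply (le_of_le_add_geom _ _ (4 * M / (1 - Q) + M) Q HQ). intros n.
  pose proof (caratheodory_approx e H b r M Q k (k + S n) HS HRe He0 ltac:(lia) Hr HQ HB)
    as Happrox.
  replace (k + S n - k)%nat with (S n) in Happrox by lia.
  pose proof (Rle_pow_le_1 Q n (k + S n) ltac:(lra) ltac:(lia)).
  pose proof (Rle_pow_le_1 Q n (S n) ltac:(lra) ltac:(lia)).
  pose proof (Rle_pow_le_1 Q 0 (S n) ltac:(lra) ltac:(lia)).
  assert (0 <= Q ^ S n)%R by (apply pow_le; lra).
  assert (4 * M * Q ^ (k + S n) / (1 - Q) <= 4 * M / (1 - Q) * Q ^ n)%R.
  { replace (4 * M / (1 - Q) * Q ^ n)%R with (4 * M * Q ^ n / (1 - Q))%R by (field; lra).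
    apply Rmult_le_compat_r; [apply Rlt_le, Rinv_0_lt_compat; lra|].
    apply Rmult_le_compat_l; lra. }
  assert (M * (Q ^ S n * Q ^ S n) <= M * Q ^ n)%R.
  { apply Rmult_le_compat_l; [lra|]. simpl in *. nra. }
  lra.
Qed.

(** * The functional [J] as a power series *)

Lemma rusch_coef_0 (c : nat -> C) : c 0%nat = 0 -> c 1%nat = 1 ->
  forall k, rusch_coef 0 c k = c k.
Proof.
  intros H0 H1 [|[|k]]; [now rewrite H0 | now rewrite H1 |]. cbn -[fact INR].
  rewrite Rmult_1_r, Rdiv_diag by apply INR_fact_neq_0. ring.
Qed.

Definition J_coef (lam gam : R) (k : nat) : R :=
  (1 - lam) * (1 - gam) + (lam * (gam + 1) + gam) * INR (S k)
  + lam * gam * (INR k * INR (S k)).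

Lemma J_coef_1 (lam gam : R) : J_coef lam gam 1 = (1 + lam + gam + 5 * lam * gam)%R.
Proof. unfold J_coef. simpl. ring. Qed.

Lemma J_coef_2 (lam gam : R) : J_coef lam gam 2 = (1 + 2 * (lam + gam + 5 * lam * gam))%R.
Proof. unfold J_coef. simpl. ring. Qed.

Definition J_series_coef (tau : C) (lam gam : R) (c : nat -> C) (k : nat) : C :=
  match k with 0%nat => 1 | S _ => / tau * RtoC (J_coef lam gam k) * c (S k) end.

Lemma is_series_J_value (tau : C) (lam gam : R) (c : nat -> C) (z R0 R1 R2 : C) :
  c 0%nat = 0 -> c 1%nat = 1 -> tau <> 0 -> z <> 0 ->
  is_series (fun k => c k * z ^ k) R0 ->
  is_series (fun k => RtoC (INR (S k)) * c (S k) * z ^ k) R1 ->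
  is_series (fun k => RtoC (INR (S k)) * (RtoC (INR (S (S k))) * c (S (S k))) * z ^ k) R2 ->
  is_series (fun k => J_series_coef tau lam gam c k * z ^ k) (J_value tau lam gam z R0 R1 R2).
Proof.
  intros H0 H1 Htau Hz S0 S1 S2.
  pose proof (@is_series_scal C_AbsRing C_NormedModule (/ z) _ _ (is_series_shift _ _ S0)) as Squot.
  assert (Szdd : is_series (fun k => RtoC (INR k * INR (S k)) * c (S k) * z ^ k) (z * R2)).
  { apply is_series_decr_1.
    refine (is_series_C_ext _ _ _ _ _ _ (@is_series_scal C_AbsRing C_NormedModule z _ _ S2));
      [intros k|]; Cfold.
    - rewrite RtoC_mult, Cpow_S. ring.
    - simpl. rewrite Rmult_0_l. ring. }
  pose proof (is_series_plus _ _ _ _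
    (is_series_plus _ _ _ _
      (is_series_plus _ _ _ _
        (@is_series_scal C_AbsRing C_NormedModule (RtoC ((1 - lam) * (1 - gam))) _ _ Squot)
        (@is_series_scal C_AbsRing C_NormedModule (RtoC (lam * (gam + 1) + gam)) _ _ S1))
      (@is_series_scal C_AbsRing C_NormedModule (RtoC (lam * gam)) _ _
        (is_series_plus _ _ _ _ Szdd (is_series_delta (- (2)) 0))))
    (is_series_delta (- (1)) 0)) as Sbracket.
  pose proof (is_series_plus _ _ _ _ (is_series_delta 1 0)
    (@is_series_scal C_AbsRing C_NormedModule (/ tau) _ _ Sbracket)) as SJ.
  refine (is_series_C_ext _ _ _ _ _ _ SJ); [intros [|k] | unfold J_value]; cbv beta; Cfold;
    cbn [Nat.eqb J_series_coef]; unfold J_coef.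
  - rewrite H1. simpl. repeat rewrite ?RtoC_mult, ?RtoC_plus, ?RtoC_minus. field. auto.
  - repeat rewrite ?RtoC_mult, ?RtoC_plus, ?RtoC_minus. rewrite !Cpow_S. field. auto.
  - rewrite H0. simpl. field. auto.
Qed.

Lemma J_condition_power_series (tau : C) (lam gam beta : R) (c : nat -> C) :
  c 0%nat = 0 -> c 1%nat = 1 -> tau <> 0 -> J_condition tau lam gam 0 beta c ->
  exists p : C -> C,
    (forall z, in_U z -> z <> 0 -> is_series (fun k => J_series_coef tau lam gam c k * z ^ k) (p z)) /\
    (forall z, in_U z -> z <> 0 -> (beta < Re (p z))%R).
Proof.
  intros H0 H1 Htau [Rh [Rh1 [Rh2 HJ]]].
  exists (fun z => J_value tau lam gam z (Rh z) (Rh1 z) (Rh2 z)).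
  assert (S0 : forall z, in_U z -> is_series (fun k => c k * z ^ k) (Rh z)).
  { intros z Hz. refine (is_series_ext _ _ _ _ (proj1 (HJ z Hz))).
    intros k. rewrite rusch_coef_0 by assumption. reflexivity. }
  assert (S1 : forall z, in_U z ->
                 is_series (fun k => RtoC (INR (S k)) * c (S k) * z ^ k) (Rh1 z))
    by (intros z Hz; apply (is_derive_power_series c Rh), HJ; assumption).
  split; [| intros z Hz; apply HJ, Hz].
  intros z Hz Hz0. apply is_series_J_value; auto.
  apply (is_derive_power_series (fun k => RtoC (INR (S k)) * c (S k)) Rh1); [exact S1 | exact Hz |].
  apply HJ, Hz.
Qed.

Lemma J_coef_bound (tau : C) (lam gam beta : R) (c : nat -> C) (k : nat) :
  c 0%nat = 0 -> c 1%nat = 1 -> tau <> 0 -> J_condition tau lam gam 0 beta c ->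
  (0 < k)%nat -> (0 <= J_coef lam gam k)%R ->
  (J_coef lam gam k * Cmod (c (S k)) <= 2 * Cmod tau * (1 - beta))%R.
Proof.
  intros H0 H1 Htau HJ Hk HP.
  destruct (J_condition_power_series tau lam gam beta c H0 H1 Htau HJ) as [p [Hp HRe]].
  pose proof (caratheodory_coef_bound _ p beta k Hp HRe eq_refl Hk) as Hcar.
  destruct k as [|k]; [lia|]. cbn [J_series_coef] in Hcar.
  assert (Htau0 : (0 < Cmod tau)%R) by (apply Cmod_gt_0, Htau).
  rewrite !Cmod_mult, Cmod_inv, Cmod_R, Rabs_pos_eq in Hcar by assumption.
  apply (Rmult_le_reg_l (/ Cmod tau)); [apply Rinv_0_lt_compat, Htau0|].
  replace (/ Cmod tau * (2 * Cmod tau * (1 - beta)))%R with (2 * (1 - beta))%R by (field; lra).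
  rewrite <- Rmult_assoc. exact Hcar.
Qed.

(** * Coefficients of the inverse function *)

Lemma normalized_series_cubic_expansion (F : C -> C) (c : nat -> C) :
  normalized_series F c ->
  exists K, (0 <= K)%R /\ forall z, (Cmod z <= 1 / 2)%R ->
    exists R, F z = z + c 2%nat * z ^ 2 + c 3%nat * z ^ 3 + z ^ 4 * R /\ (Cmod R <= K)%R.
Proof.
  intros [H0 [H1 HS]].
  assert (Hs : in_U (RtoC (3 / 4))) by (unfold in_U; rewrite Cmod_R, Rabs_pos_eq; lra).
  destruct (series_terms_bounded c (3 / 4) _ ltac:(lra) (HS _ Hs)) as [M HM].
  assert (HM0 : (0 <= M)%R).
  { specialize (HM 0%nat). pose proof (Cmod_ge_0 (c 0%nat)). simpl in HM. lra. }
  set (q := ((1 / 2) / (3 / 4))%R). set (M4 := (M / (3 / 4) ^ 4)%R).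
  assert (Hq : (0 <= q < 1)%R) by (unfold q; lra).
  assert (HM4 : (0 <= M4)%R) by (unfold M4; apply Rdiv_le_0_compat; [lra | apply pow_lt; lra]).
  assert (Hgeom : is_series (fun k => M4 * q ^ k)%R (M4 * / (1 - q))%R).
  { apply (@is_series_scal R_AbsRing R_NormedModule), is_series_geom. rewrite Rabs_pos_eq; lra. }
  exists (M4 * / (1 - q))%R. split; [apply Rmult_le_pos; [lra | apply Rlt_le, Rinv_0_lt_compat; lra]|].
  intros z Hz.
  assert (HzU : in_U z) by (unfold in_U; lra).
  assert (Htail_bound : forall k, (Cmod (c (4 + k)%nat * z ^ k) <= M4 * q ^ k)%R).
  { intros k. rewrite Cmod_mult, Cmod_pow.
    eapply Rle_trans; [| exact (coef_geometric_bound c M (3 / 4) (1 / 2) ltac:(lra) ltac:(lra) HM 4 k)].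
    apply Rmult_le_compat_l; [apply Cmod_ge_0 | apply pow_incr; pose proof (Cmod_ge_0 z); lra]. }
  destruct (@ex_series_le C_AbsRing C_CompleteNormedModule (fun k => c (4 + k)%nat * z ^ k) _
              Htail_bound (ex_intro _ _ Hgeom)) as [R HR].
  exists R. split.
  - assert (Htail : is_series (fun k => z ^ 4 * (c (4 + k)%nat * z ^ k))
                      (F z - z - c 2%nat * z ^ 2 - c 3%nat * z ^ 3)).
    { refine (is_series_C_ext _ _ _ _ _ _ (is_series_shift _ _ (is_series_shift _ _
               (is_series_shift _ _ (is_series_shift _ _ (HS z HzU)))))); [intros k|]; cbv beta; Cfold.
      - simpl. ring.
      - rewrite H0, H1. simpl. ring. }
    pose proof (filterlim_locally_unique _ _ _
                  (@is_series_scal C_AbsRing C_NormedModule (z ^ 4) _ _ HR) Htail) as E.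
    change (z ^ 4 * R = F z - z - c 2%nat * z ^ 2 - c 3%nat * z ^ 3) in E.
    rewrite E. ring.
  - exact (Cmod_series_le _ _ _ _ HR Hgeom Htail_bound).
Qed.

Lemma Cmod_eq_0_of_le_linear (x : C) (K t0 : R) : (0 < t0)%R ->
  (forall t, (0 < t < t0)%R -> (Cmod x <= K * t)%R) -> x = 0.
Proof.
  intros Ht0 H. apply Cmod_eq_0, Rle_antisym; [| apply Cmod_ge_0].
  apply (le_of_le_add_geom _ 0 (K * t0 / 2) (1 / 2)); [lra|]. intros n.
  assert (Hn : (0 < (1 / 2) ^ n <= 1)%R)
    by (split; [apply pow_lt; lra | apply (Rle_pow_le_1 _ 0 n); [lra | lia]]).
  replace (0 + K * t0 / 2 * (1 / 2) ^ n)%R with (K * (t0 * ((1 / 2) * (1 / 2) ^ n)))%R by field.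
  apply H. nra.
Qed.

Lemma quadratic_cubic_coefs_eq_0 (x y : C) (K t0 : R) : (0 < t0)%R ->
  (forall t : R, (0 < t < t0)%R -> (Cmod (x * t ^ 2 + y * t ^ 3)%C <= K * t ^ 4)%R) ->
  x = 0 /\ y = 0.
Proof.
  intros Ht0 H.
  assert (Ht : forall t n, (0 <= t)%R -> Cmod (RtoC t ^ n) = (t ^ n)%R)
    by (intros t n Ht; rewrite Cmod_pow, Cmod_R, Rabs_pos_eq; lra).
  assert (HK : (0 <= K)%R).
  { specialize (H (t0 / 2)%R ltac:(lra)).
    match type of H with (Cmod ?v <= _)%R => pose proof (Cmod_ge_0 v) end.
    assert (0 < (t0 / 2) ^ 4)%R by (apply pow_lt; lra). nra. }
  assert (Hx : x = 0).
  { apply (Cmod_eq_0_of_le_linear x (K * t0 + Cmod y) t0 Ht0). intros t Htt.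
    specialize (H t Htt).
    assert (Hsplit : x * RtoC t ^ 2 = (x * RtoC t ^ 2 + y * RtoC t ^ 3) - y * RtoC t ^ 3) by ring.
    assert (Hxt : (Cmod x * t ^ 2 <= K * t ^ 4 + Cmod y * t ^ 3)%R).
    { rewrite <- (Ht t 2%nat), <- (Ht t 3%nat), <- !Cmod_mult, Hsplit by lra.
      eapply Rle_trans; [apply Cmod_triangle|]. rewrite Cmod_opp. lra. }
    assert (HKt : (K * t ^ 4 <= K * t0 * t ^ 3)%R).
    { replace (K * t ^ 4)%R with (K * t * t ^ 3)%R by ring.
      apply Rmult_le_compat_r; [apply pow_le; lra | apply Rmult_le_compat_l; lra]. }
    apply (Rmult_le_reg_r (t ^ 2)); [apply pow_lt; lra|].
    replace ((K * t0 + Cmod y) * t * t ^ 2)%R with (K * t0 * t ^ 3 + Cmod y * t ^ 3)%R by ring.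
    lra. }
  split; [exact Hx|]. subst x.
  apply (Cmod_eq_0_of_le_linear y K t0 Ht0). intros t Htt.
  specialize (H t Htt). rewrite Cmult_0_l, Cplus_0_l, Cmod_mult, Ht in H by lra.
  apply (Rmult_le_reg_r (t ^ 3)); [apply pow_lt; lra|]. simpl in H |- *. nra.
Qed.

Lemma Cmod_add_le (x y : C) (X Y : R) :
  (Cmod x <= X)%R -> (Cmod y <= Y)%R -> (Cmod (x + y) <= X + Y)%R.
Proof. intros. eapply Rle_trans; [apply Cmod_triangle | lra]. Qed.

Lemma Cmod_mul_le (x y : C) (X Y : R) :
  (Cmod x <= X)%R -> (Cmod y <= Y)%R -> (Cmod (x * y) <= X * Y)%R.
Proof. intros. rewrite Cmod_mult. apply Rmult_le_compat; auto using Cmod_ge_0. Qed.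

Lemma Cmod_pow_le (x : C) (X : R) (n : nat) : (Cmod x <= X)%R -> (Cmod (x ^ n) <= X ^ n)%R.
Proof. intros. rewrite Cmod_pow. apply pow_incr. split; [apply Cmod_ge_0 | assumption]. Qed.

Ltac Cmod_bound :=
  repeat first [ eassumption | apply Cmod_add_le | apply Cmod_mul_le | apply Cmod_pow_le
               | apply Rle_refl ].

(* [U] and [K] are left as existential variables and assembled by [Cmod_bound] from the
   shapes of [u] and [E]; they only involve [a2], [a3], [b2], [b3], [Kf] and [Kg]. *)
Lemma cubic_expansion_compose (a2 a3 b2 b3 : C) (Kf Kg : R) :
  exists U K : R, forall z Rf : C, (Cmod z <= 1)%R -> (Cmod Rf <= Kf)%R ->
    exists u : C, z + a2 * z ^ 2 + a3 * z ^ 3 + z ^ 4 * Rf = z * u /\ (Cmod u <= U)%R /\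
      forall Rg : C, (Cmod Rg <= Kg)%R -> exists E : C,
        z * u + b2 * (z * u) ^ 2 + b3 * (z * u) ^ 3 + (z * u) ^ 4 * Rg
          = z + (a2 + b2) * z ^ 2 + (a3 + 2 * a2 * b2 + b3) * z ^ 3 + z ^ 4 * E /\
        (Cmod E <= K)%R.
Proof.
  do 2 eexists. intros z Rf Hz HRf.
  exists (1 + z * (a2 + z * (a3 + z * Rf))).
  split; [ring | split; [Cmod_bound|]].
  intros Rg HRg.
  exists (Rf + b2 * (2 * (a3 + z * Rf) + (a2 + z * (a3 + z * Rf)) ^ 2)
          + b3 * (a2 + z * (a3 + z * Rf))
            * ((1 + z * (a2 + z * (a3 + z * Rf))) ^ 2 + (1 + z * (a2 + z * (a3 + z * Rf))) + 1)
          + (1 + z * (a2 + z * (a3 + z * Rf))) ^ 4 * Rg).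
  split; [ring | Cmod_bound].
Qed.

Lemma inverse_coefs (f g : C -> C) (a b : nat -> C) :
  normalized_series f a -> normalized_series g b -> extends_inverse f g ->
  b 2%nat = - a 2%nat /\ b 3%nat = 2 * a 2%nat ^ 2 - a 3%nat.
Proof.
  intros Hf Hg Hinv.
  destruct (normalized_series_cubic_expansion f a Hf) as [Kf [_ Ef]].
  destruct (normalized_series_cubic_expansion g b Hg) as [Kg [_ Eg]].
  destruct (cubic_expansion_compose (a 2%nat) (a 3%nat) (b 2%nat) (b 3%nat) Kf Kg)
    as [U [K Hcomp]].
  set (t0 := (/ (2 * (Rabs U + 1)))%R).
  pose proof (Rabs_pos U).
  assert (Ht0 : (0 < t0)%R) by (apply Rinv_0_lt_compat; lra).
  assert (Ht0U : (t0 * (Rabs U + 1) = 1 / 2)%R) by (unfold t0; field; lra).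
  destruct (quadratic_cubic_coefs_eq_0 (a 2%nat + b 2%nat)
              (a 3%nat + 2 * a 2%nat * b 2%nat + b 3%nat) K t0 Ht0) as [E2 E3].
  - intros t Ht.
    assert (Hz : Cmod (RtoC t) = t) by (rewrite Cmod_R, Rabs_pos_eq; lra).
    assert (Ht1 : (t <= 1 / 2)%R) by nra.
    destruct (Ef t ltac:(lra)) as [Rf [Hft HRf]].
    destruct (Hcomp t Rf ltac:(lra) HRf) as [u [Hu [HuU HE]]].
    rewrite Hu in Hft.
    assert (Hfz : (Cmod (f t) <= 1 / 2)%R).
    { rewrite Hft, Cmod_mult, Hz. pose proof (Rle_abs U).
      assert (t * Cmod u <= t * (Rabs U + 1))%R by (apply Rmult_le_compat_l; lra). nra. }
    destruct (Eg (f t) Hfz) as [Rg [Hgf HRg]].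
    destruct (HE Rg HRg) as [E [HEid HEK]].
    assert (Hid : RtoC t = g (f t)) by (symmetry; apply Hinv; unfold in_U; lra).
    rewrite Hgf, Hft, HEid in Hid.
    replace ((a 2%nat + b 2%nat) * RtoC t ^ 2 + (a 3%nat + 2 * a 2%nat * b 2%nat + b 3%nat) * RtoC t ^ 3)
      with (- (RtoC t ^ 4 * E))
      by (match type of Hid with _ = ?rhs => transitivity (rhs - RtoC t - RtoC t ^ 4 * E) end;
          [rewrite <- Hid | ]; ring).
    rewrite Cmod_opp, Cmod_mult, Cmod_pow, Hz, Rmult_comm.
    apply Rmult_le_compat_r; [apply pow_le; lra | exact HEK].
  - assert (Hb2 : b 2%nat = - a 2%nat)
      by (transitivity (a 2%nat + b 2%nat - a 2%nat); [ring | rewrite E2; ring]).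
    split; [exact Hb2|].
    transitivity (a 3%nat + 2 * a 2%nat * b 2%nat + b 3%nat - 2 * a 2%nat * b 2%nat - a 3%nat);
      [ring | rewrite E3, Hb2; ring].
Qed.

Lemma Cmod_le_sqrt_of_sum_sq (x y z : C) (P T : R) : (0 < P)%R -> y + z = 2 * x ^ 2 ->
  (P * Cmod y <= T)%R -> (P * Cmod z <= T)%R -> (Cmod x <= sqrt (T / P))%R.
Proof.
  intros HP Hsum Hy Hz.
  rewrite <- (sqrt_pow2 (Cmod x)) by apply Cmod_ge_0. apply sqrt_le_1_alt.
  apply (Rle_div_r _ _ _ HP).
  assert (H2 : (2 * Cmod x ^ 2 <= Cmod y + Cmod z)%R).
  { rewrite <- Cmod_pow, <- (Rabs_pos_eq 2), <- Cmod_R, <- Cmod_mult, <- Hsum by lra.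
    apply Cmod_triangle. }
  nra.
Qed.

Theorem corollary7 (lam gam beta : R) (tau : C) (f : C -> C) (a : nat -> C) :
  (0 <= lam)%R -> (0 <= gam <= 1)%R -> (0 <= beta < 1)%R -> tau <> 0 ->
  Theta_Sigma tau lam gam 0 beta f a ->
  (Cmod (a 2%nat) <=
     Rmin (2 * Cmod tau * (1 - beta) / (1 + lam + gam + 5 * lam * gam))
          (sqrt (2 * Cmod tau * (1 - beta) /
                 (1 + 2 * (lam + gam + 5 * lam * gam)))))%R /\
  (Cmod (a 3%nat) <=
     2 * Cmod tau * (1 - beta) / (1 + 2 * (lam + gam + 5 * lam * gam)))%R.
Proof.
  intros Hlam Hgam _ Htau [g [b [[Hfa [_ [Hgb [_ Hinv]]]] [Ja Jb]]]].
  pose proof Hfa as [Ha0 [Ha1 _]]. pose proof Hgb as [Hb0 [Hb1 _]].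
  assert (HP1 : (0 < J_coef lam gam 1)%R) by (rewrite J_coef_1; nra).
  assert (HP2 : (0 < J_coef lam gam 2)%R) by (rewrite J_coef_2; nra).
  pose proof (J_coef_bound tau lam gam beta a 1 Ha0 Ha1 Htau Ja ltac:(lia) ltac:(lra)) as Ha2.
  pose proof (J_coef_bound tau lam gam beta a 2 Ha0 Ha1 Htau Ja ltac:(lia) ltac:(lra)) as Ha3.
  pose proof (J_coef_bound tau lam gam beta b 2 Hb0 Hb1 Htau Jb ltac:(lia) ltac:(lra)) as Hb3.
  destruct (inverse_coefs f g a b Hfa Hgb Hinv) as [_ Eb3].
  rewrite J_coef_1 in HP1, Ha2. rewrite J_coef_2 in HP2, Ha3, Hb3.
  split; [apply Rmin_glb |]; [| | apply (Rle_div_r _ _ _ HP2); lra].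
  - apply (Rle_div_r _ _ _ HP1). lra.
  - apply (Cmod_le_sqrt_of_sum_sq _ (a 3%nat) (b 3%nat)); try assumption.
    rewrite Eb3. ring.
Qed.
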